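(* Let $m\ge1$ and $n\in\mathbb{R}$. Suppose the boxes $b_0,\ldots,b_{m-1}$ are independent variables where each $b_i$ ranges over the whole real interval $[u_i,v_i]$, and $\sum_{i=0}^{m-1}u_i\le n\le\sum_{i=0}^{m-1}v_i$. Then there is no sequence $T=(t_0,\ldots,t_{m-1})$ of reals such that both (1) $\sum_{i}t_i<n$, and (2) for every choice of $B=(b_0,\ldots,b_{m-1})$ in the allowed ranges with $\sum_i b_i\le n$ and every $l\in\{1,\ldots,m\}$, there exists $i$ such that $\sum_{j=i}^{i+l'-1}b_j\le\sum_{j=i}^{i+l'-1}t_j$ for all $l'\in\{1,\ldots,l\}$.
   Context: Indices are taken modulo $m$. The chain $c_i^{l}$ is $(b_i,\ldots,b_{i+l-1})$ with sum $\|c_i^{l}\|=\sum_{j=i}^{i+l-1}b_j$. *)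

From HB Require Import structures.
From mathcomp Require Import all_boot all_order all_algebra.
Set Implicit Arguments. Unset Strict Implicit. Unset Printing Implicit Defensive.
Import Order.TTheory GRing.Theory Num.Theory.
Local Open Scope ring_scope.

Definition chain_sum (R : realFieldType) (m : nat) (b : nat -> R) (i l : nat) : R :=
  \sum_(i <= j < i + l) b (j %% m)%N.

From HB Require Import structures.
From mathcomp Require Import all_boot all_order all_algebra.
Set Implicit Arguments. Unset Strict Implicit. Unset Printing Implicit Defensive.
Import Order.TTheory GRing.Theory Num.Theory.
Local Open Scope ring_scope.

(* Interpolating linearly between the lower and upper bounds yields boxes
   whose total is exactly n.  The chain of length m starting anywhere is the
   whole cycle, so condition (2) for l = m gives n = sum b <= sum t < n. *)

Lemma chain_sum_full (R : realFieldType) (m : nat) (f : nat -> R) (i : nat) :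
  (0 < m)%N -> chain_sum m f i m = \sum_(k < m) f k.
Proof.
move=> m_gt0; rewrite /chain_sum; elim: i => [|i IHi].
  by rewrite add0n big_mkord; apply: eq_bigr => k _; rewrite modn_small.
have i_lt : (i < i + m)%N by rewrite -{1}(addn0 i) ltn_add2l.
by rewrite -IHi (big_ltn i_lt) addSn big_nat_recr //= modnDr addrC.
Qed.

Lemma ler_interpolate (R : numDomainType) (a c x : R) :
  a <= c -> 0 <= x <= 1 -> a <= a + x * (c - a) <= c.
Proof.
move=> le_ac /andP[x_ge0 x_le1]; have ca_ge0 : 0 <= c - a by rewrite subr_ge0.
rewrite lerDl mulr_ge0 //= -lerBrDl -{2}(mul1r (c - a)).
exact: ler_wpM2r.
Qed.

Lemma exists_sum_between (R : realFieldType) (m : nat) (u v : nat -> R) (n : R) :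
  (forall i, (i < m)%N -> u i <= v i) ->
  \sum_(i < m) u i <= n -> n <= \sum_(i < m) v i ->
  exists b : nat -> R,
    (forall i, (i < m)%N -> u i <= b i <= v i) /\ \sum_(i < m) b i = n.
Proof.
set U := \sum_(i < m) u i; set V := \sum_(i < m) v i => le_uv le_Un le_nV.
have [eq_VU | neq_VU] := eqVneq V U.
  exists u; split=> [i lt_im|]; first by rewrite lexx le_uv.
  by apply/eqP; rewrite -/U eq_le le_Un -eq_VU.
have lt_UV : U < V by rewrite lt_neqAle eq_sym neq_VU (le_trans le_Un le_nV).
have VU_gt0 : 0 < V - U by rewrite subr_gt0.
pose x := (n - U) / (V - U).
have x_01 : 0 <= x <= 1.
  by rewrite /x divr_ge0 ?subr_ge0 ?(ltW lt_UV) //= ler_pdivrMr // mul1r lerD2r.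
exists (fun i => u i + x * (v i - u i)); split=> [i lt_im|].
  exact: ler_interpolate (le_uv i lt_im) x_01.
rewrite big_split /= -mulr_sumr sumrB -/U -/V divfK ?gt_eqF //.
by rewrite addrC subrK.
Qed.

Theorem mainTheorem5 (R : realFieldType) (m : nat) (n : R) (u v : nat -> R) :
  (1 <= m)%N ->
  (forall i, (i < m)%N -> u i <= v i) ->
  \sum_(i < m) u i <= n -> n <= \sum_(i < m) v i ->
  ~ (exists t : nat -> R,
       \sum_(i < m) t i < n /\
       forall b : nat -> R,
         (forall i, (i < m)%N -> u i <= b i <= v i) ->
         \sum_(i < m) b i <= n ->
         forall l, (1 <= l <= m)%N ->
           exists i, (i < m)%N /\
             forall l', (1 <= l' <= l)%N -> chain_sum m b i l' <= chain_sum m t i l').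
Proof.
move=> m_gt0 le_uv le_Un le_nV [t [sum_t_lt covers]].
have [b [b_in sum_b]] := exists_sum_between le_uv le_Un le_nV.
have sum_b_le : \sum_(i < m) b i <= n by rewrite sum_b.
have l_m : (1 <= m <= m)%N by rewrite m_gt0 leqnn.
have [i [_ chains_le]] := covers b b_in sum_b_le m l_m.
have := chains_le m l_m; rewrite !chain_sum_full // sum_b => le_n_sum_t.
by have := le_lt_trans le_n_sum_t sum_t_lt; rewrite ltxx.
Qed.
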